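(* Let $G=(V,E)$ be a naturally ordered DAG. For every finite set $f_1,\dots,f_r\in\mathbb R[\Sigma]$ there exist $s\in S_G$ and $h_1,\dots,h_r\in\mathbb R[\Sigma_E]$ such that $sf_i-h_i\in I_G$ for $i=1,\dots,r$.
   Context: $\mathbb R[\Sigma]$ is the polynomial ring in symmetric variables $\sigma_{ij}=\sigma_{ji}$, $i,j\in V=[p]$; $\mathbb R[\Sigma_E]\subseteq\mathbb R[\Sigma]$ is the subring generated by $\sigma_{ii}$ ($i\in V$) and $\sigma_{ij}$ ($ij\in E$). $G$ naturally ordered means $ij\in E\Rightarrow i<j$. $I_G$ is the ideal generated by $|\Sigma_{ij|\mathrm{pa}(j)}|$ for $i<j$ with $ij\notin E$, where $\Sigma_{ij|K}$ has rows $(i,K)$ and columns $(j,K)$. $S_G$ is the multiplicatively closed set $\{\prod_{i\in V}|\Sigma_{\mathrm{pa}(i)}|^{k_i}:k_i\in\mathbb N\}$. *)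

From HB Require Import structures.
From mathcomp Require Import all_boot all_order all_algebra.
From mathcomp Require Import reals.
From mathcomp Require Import mpoly.

Set Implicit Arguments.
Unset Strict Implicit.
Unset Printing Implicit Defensive.

Import Order.TTheory GRing.Theory Num.Theory.
Local Open Scope ring_scope.

(* Ambient polynomial ring: one variable X_(i,j) for every ordered pair
   (i,j) in [p]x[p]; the symmetric variable sigma_ij = sigma_ji is the
   variable indexed by (min(i,j), max(i,j)).  The ring R[Sigma] is the
   subring of polynomials using only the variables (i,j) with i <= j. *)
Definition SPoly (R : realType) (p : nat) := {mpoly R[p * p]}.

Definition sigma (R : realType) (p : nat) (i j : 'I_p) : SPoly R p :=
  if (i <= j)%N then 'X_(mxvec_index i j) else 'X_(mxvec_index j i).

Definition uses_only (R : realType) (p : nat) (P : 'I_(p * p) -> Prop)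
  (f : SPoly R p) : Prop :=
  forall m, m \in msupp f -> forall v : 'I_(p * p), (m v != 0)%N -> P v.

Definition in_RSigma (R : realType) (p : nat) (f : SPoly R p) : Prop :=
  uses_only (fun v => exists i j : 'I_p, (i <= j)%N /\ v = mxvec_index i j) f.

(* A DAG on V = [p]: E i j means the directed edge i -> j.
   Naturally ordered: ij in E implies i < j. *)
Definition naturally_ordered (p : nat) (E : rel 'I_p) : Prop :=
  forall i j, E i j -> (i < j)%N.

Definition in_RSigmaE (R : realType) (p : nat) (E : rel 'I_p) (f : SPoly R p)
  : Prop :=
  uses_only (fun v => exists i j : 'I_p,
               (i == j \/ E i j) /\ v = mxvec_index i j) f.

Definition pa (p : nat) (E : rel 'I_p) (j : 'I_p) : {set 'I_p} :=
  [set i | E i j].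

(* determinant of the submatrix of Sigma with rows rs and columns cs
   (given as sequences of equal length; d is an unused default) *)
Definition minor (R : realType) (p : nat) (d : 'I_p) (rs cs : seq 'I_p)
  : SPoly R p :=
  \det (\matrix_(a < size rs, b < size rs)
          sigma R (nth d rs a) (nth d cs b)).

Definition cond_minor (R : realType) (p : nat) (i j : 'I_p) (K : {set 'I_p})
  : SPoly R p := minor R i (i :: enum K) (j :: enum K).

(* |Sigma_K| (principal minor; = 1 for K empty) *)
Definition pminor (R : realType) (p : nat) (K : {set 'I_p}) : SPoly R p :=
  \det (\matrix_(a < #|K|, b < #|K|)
          sigma R (enum_val a) (enum_val b)).

Definition in_IG (R : realType) (p : nat) (E : rel 'I_p) (f : SPoly R p) : Prop :=
  exists c : 'I_p -> 'I_p -> SPoly R p,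
    (forall i j, in_RSigma (c i j)) /\
    f = \sum_(i < p) \sum_(j < p | (i < j)%N && ~~ E i j)
          c i j * cond_minor R i j (pa E j).

Definition in_SG (R : realType) (p : nat) (E : rel 'I_p) (s : SPoly R p) : Prop :=
  exists k : 'I_p -> nat, s = \prod_(i < p) pminor R (pa E i) ^+ k i.

From HB Require Import structures.
From mathcomp Require Import all_boot all_order all_algebra.
From mathcomp Require Import reals.
From mathcomp Require Import mpoly.
From mathcomp Require Import ring.
Import Order.TTheory GRing.Theory Num.Theory.
Local Open Scope ring_scope.
Set Implicit Arguments.
Unset Strict Implicit.

(* Induction along the natural order of the vertices.  Call g reducible at
   level n when S_k g is congruent modulo I_G to an element of R[Sigma_E] for
   some S_k = prod_i |Sigma_pa(i)|^(k i) in S_G with k supported below n.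
   Reducibility is closed under products, and under sums as soon as finitely
   many reducible polynomials have a common multiplier; at level n+1 such a
   multiplier exists because the correction factors S_(K - k_i) only involve
   variables of level n.  A variable sigma_un with u < n is reducible at level
   n+1: either un is an edge, or expanding the generator |Sigma_{un|pa(n)}|
   along its first row shows sigma_un |Sigma_pa(n)| to be congruent to a
   polynomial in the edge variables sigma_xn (x in pa(n)) and in variables of
   level n, and the factor |Sigma_pa(n)| is absorbed into the multiplier. *)

Definition ring_closed (T : pzRingType) (P : T -> Prop) : Prop :=
  [/\ P 0, P 1, P (-1), forall x y, P x -> P y -> P (x + y)
    & forall x y, P x -> P y -> P (x * y)].

Section RingClosed.
Variables (T : comPzRingType) (P : T -> Prop).
Hypothesis PR : ring_closed P.

Lemma ring_closedB x y : P x -> P y -> P (x - y).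
Proof.
by have [_ _ PN1 PD PM] := PR; move=> Px Py; rewrite -mulN1r; apply/PD/PM.
Qed.

Lemma ring_closed_sign k : P ((-1) ^+ k).
Proof.
by have [_ P1 PN1 _ PM] := PR; elim: k => [|k IHk]; rewrite ?expr0 // exprS; apply: (PM).
Qed.

Lemma det_closed m (A : 'M[T]_m) : (forall i j, P (A i j)) -> P (\det A).
Proof.
have [P0 P1 _ PD PM] := PR; move=> PA; apply: (big_ind P) => // s _.
apply: (PM); first exact: ring_closed_sign.
by apply: (big_ind P) => // i _; apply: (PA).
Qed.

Lemma det_sub_corner_closed m (A : 'M[T]_m.+1) :
  (forall i j, (i != ord0) || (j != ord0) -> P (A i j)) ->
  P (\det A - A ord0 ord0 * \det (row' ord0 (col' ord0 A))).
Proof.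
have [P0 _ _ PD PM] := PR; move=> PA.
have lift_neq0 j : lift ord0 j != ord0 :> 'I_m.+1 by rewrite eq_sym neq_lift.
rewrite (expand_det_row _ ord0) big_ord_recl /cofactor addn0 expr0 mul1r.
rewrite addrAC subrr add0r; apply: (big_ind P) => // j _.
apply: (PM); first by apply: (PA); rewrite lift_neq0 orbT.
apply: (PM); first exact: ring_closed_sign.
by apply: det_closed => a b; rewrite !mxE; apply: (PA); rewrite lift_neq0.
Qed.

End RingClosed.

Section UsesOnly.
Variables (R : realType) (p : nat).
Implicit Types (P Q : 'I_(p * p) -> Prop) (f g : SPoly R p).

Lemma uses_only_sub P Q f :
  (forall v, P v -> Q v) -> uses_only P f -> uses_only Q f.
Proof. by move=> PQ Pf m fm v mv; apply/PQ/(Pf m fm v mv). Qed.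

Lemma uses_onlyC P (c : R) : uses_only P (c%:MP : SPoly R p).
Proof.
by move=> m; rewrite msuppC; case: eqP => // _; rewrite inE => /eqP -> v; rewrite mnm0E.
Qed.

Lemma uses_onlyD P f g : uses_only P f -> uses_only P g -> uses_only P (f + g).
Proof.
by move=> Pf Pg m /msuppD_le; rewrite mem_cat => /orP[]; [apply: Pf | apply: Pg].
Qed.

Lemma uses_onlyM P f g : uses_only P f -> uses_only P g -> uses_only P (f * g).
Proof.
move=> Pf Pg m /msuppM_le /allpairsP [[m1 m2] /= [m1f m2g ->]] v.
rewrite mnmDE; have [m1v0 | m1v] := eqVneq (m1 v) 0%N.
  by rewrite m1v0 add0n; apply: Pg.
by move=> _; apply: (Pf m1 m1f).
Qed.

Lemma uses_onlyX P i : P i -> uses_only P ('X_i : SPoly R p).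
Proof.
by move=> Pi m; rewrite msuppX inE => /eqP -> v; rewrite mnm1E; case: (i =P v) => [<-|].
Qed.

Lemma uses_only_ring_closed P : ring_closed (@uses_only R p P).
Proof.
split; [rewrite -mpolyC0 | rewrite -mpolyC1 | rewrite -mpolyC1 -mpolyCN | |];
  by [apply: uses_onlyC | apply: uses_onlyD | apply: uses_onlyM].
Qed.

Lemma uses_only_ind Q (Pr : SPoly R p -> Prop) :
  (forall c : R, Pr c%:MP) -> (forall f g, Pr f -> Pr g -> Pr (f + g)) ->
  (forall f g, Pr f -> Pr g -> Pr (f * g)) -> (forall v, Q v -> Pr 'X_v) ->
  forall f, uses_only Q f -> Pr f.
Proof.
move=> PrC PrD PrM PrX f Qf; have Pr1 : Pr 1 by rewrite -mpolyC1.
rewrite (mpolyE f) big_seq; apply: (big_ind Pr) => [|//|m fm].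
  by rewrite -mpolyC0.
rewrite -mul_mpolyC; apply: (PrM) => //; rewrite mpolyXE_id.
apply: (big_ind Pr) => // i _; have [-> | mi] := eqVneq (m i) 0%N; first by rewrite expr0.
have Qi : Q i by apply: (Qf m fm i).
by elim: (m i) => [|k IHk]; rewrite ?expr0 // exprS; apply: (PrM) => //; apply: PrX.
Qed.

Definition below (n : nat) (v : 'I_(p * p)) : Prop :=
  exists i j : 'I_p, [/\ (i <= j)%N, (j < n)%N & v = mxvec_index i j].

Lemma in_RSigma_below f : in_RSigma f -> uses_only (below p) f.
Proof. by apply: uses_only_sub => v [i [j [ij ->]]]; exists i, j. Qed.

Lemma below_in_RSigma n f : uses_only (below n) f -> in_RSigma f.
Proof. by apply: uses_only_sub => v [i [j [ij _ ->]]]; exists i, j. Qed.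

Lemma sigmaC (i j : 'I_p) : sigma R i j = sigma R j i.
Proof.
rewrite /sigma; case: (leqP i j) => ij; case: (leqP j i) => ji //.
  by have -> : i = j by apply/val_inj/anti_leq; rewrite ij ji.
by have := ltn_trans ij ji; rewrite ltnn.
Qed.

Lemma sigma_below n (i j : 'I_p) :
  (i < n)%N -> (j < n)%N -> uses_only (below n) (sigma R i j).
Proof.
rewrite /sigma; case: (leqP i j) => ij ilt jlt; apply: uses_onlyX.
  by exists i, j.
by exists j, i; rewrite ltnW.
Qed.

Lemma sigma_in_RSigma (i j : 'I_p) : in_RSigma (sigma R i j).
Proof. by apply: (below_in_RSigma (n := p)); apply: sigma_below. Qed.

End UsesOnly.

Section Reduction.
Variables (R : realType) (p : nat) (E : rel 'I_p).
Hypothesis Hnat : naturally_ordered E.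
Implicit Types (f g s : SPoly R p) (k : 'I_p -> nat).

Lemma in_RSigmaE_RSigma f : in_RSigmaE E f -> in_RSigma f.
Proof.
apply: uses_only_sub => v [i [j [[/eqP <- | /Hnat/ltnW ij] ->]]]; first by exists i, i.
by exists i, j.
Qed.

Lemma sigma_in_RSigmaE (i j : 'I_p) : i = j \/ E i j -> in_RSigmaE E (sigma R i j).
Proof.
rewrite /sigma => -[<- | ij].
  by rewrite leqnn; apply: uses_onlyX; exists i, i; split=> //; left.
by rewrite ltnW ?Hnat //; apply: uses_onlyX; exists i, j; split=> //; right.
Qed.

Lemma in_IG0 : in_IG E (0 : SPoly R p).
Proof.
exists (fun _ _ => 0); split => [i j|]; first by rewrite -mpolyC0; apply: uses_onlyC.
by rewrite big1 // => i _; rewrite big1 // => j _; rewrite mul0r.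
Qed.

Lemma in_IGD f g : in_IG E f -> in_IG E g -> in_IG E (f + g).
Proof.
move=> [c [cR ->]] [d [dR ->]]; exists (fun i j => c i j + d i j); split.
  by move=> i j; apply: uses_onlyD; [apply: cR | apply: dR].
rewrite -big_split; apply: eq_bigr => i _; rewrite -big_split.
by apply: eq_bigr => j _; rewrite mulrDl.
Qed.

Lemma in_IGMl s f : in_RSigma s -> in_IG E f -> in_IG E (s * f).
Proof.
move=> sR [c [cR ->]]; exists (fun i j => s * c i j); split.
  by move=> i j; apply: uses_onlyM; [apply: sR | apply: cR].
rewrite mulr_sumr; apply: eq_bigr => i _; rewrite mulr_sumr.
by apply: eq_bigr => j _; rewrite mulrA.
Qed.

Lemma cond_minor_in_IG (i j : 'I_p) :
  (i < j)%N -> ~~ E i j -> in_IG E (cond_minor R i j (pa E j)).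
Proof.
move=> ij Eij; exists (fun a b => ((a == i) && (b == j))%:R); split.
  by move=> a b; rewrite -mpolyC_nat; apply: uses_onlyC.
rewrite (bigD1 i) //= (bigD1 j) /=; last by rewrite ij Eij.
rewrite !eqxx mul1r big1 ?addr0 => [|b /andP [_ /negbTE ->]]; last by rewrite andbF mul0r.
rewrite big1 ?addr0 // => a /negbTE ai; rewrite big1 // => b _.
by rewrite ai mul0r.
Qed.

Lemma pminor_enum (K : {set 'I_p}) (d : 'I_p) :
  pminor R K = \det (\matrix_(a < size (enum K), b < size (enum K))
                       sigma R (nth d (enum K) a) (nth d (enum K) b)).
Proof.
rewrite /pminor; have -> : \matrix_(a < #|K|, b < #|K|) sigma R (enum_val a) (enum_val b)
    = \matrix_(a < #|K|, b < #|K|) sigma R (nth d (enum K) a) (nth d (enum K) b).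
  by apply/matrixP => a b; rewrite !mxE -!(enum_val_nth d).
by rewrite cardE.
Qed.

Lemma cond_minor_sub_closed (P : SPoly R p -> Prop) (u v : 'I_p) (K : {set 'I_p}) :
  ring_closed P -> (forall x, x \in K -> P (sigma R u x)) ->
  (forall x y, x \in K -> y \in v :: enum K -> P (sigma R x y)) ->
  P (cond_minor R u v K - sigma R u v * pminor R K).
Proof.
move=> PR Pu PK; rewrite /cond_minor /minor (pminor_enum K u).
set M := \matrix_(a, b) _.
have -> : sigma R u v = M ord0 ord0 by rewrite mxE.
have -> : \det (\matrix_(a < size (enum K), b < size (enum K))
                 sigma R (nth u (enum K) a) (nth u (enum K) b))
          = \det (row' ord0 (col' ord0 M)).
  by congr (\det _); apply/matrixP => a b; rewrite !mxE.
apply: det_sub_corner_closed => // i j; rewrite mxE.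
have mem_nthK (a : 'I_(size (enum K))) : nth u (enum K) a \in K.
  by rewrite -mem_enum mem_nth.
case: (unliftP ord0 i) => [a|] ->.
  by move=> _; rewrite lift0; apply: PK; [apply: mem_nthK | apply/mem_nth/(ltn_ord j)].
case: (unliftP ord0 j) => [b|] ->; last by rewrite eqxx.
by move=> _; rewrite lift0; apply: Pu (mem_nthK b).
Qed.

Definition sgprod k : SPoly R p := \prod_(i < p) pminor R (pa E i) ^+ k i.

Definition supp_lt (n : nat) k : Prop := forall i : 'I_p, (n <= i)%N -> k i = 0%N.

Lemma eq_sgprod k1 k2 : k1 =1 k2 -> sgprod k1 = sgprod k2.
Proof. by move=> eqk; apply: eq_bigr => i _; rewrite eqk. Qed.

Lemma sgprodD k1 k2 : sgprod (fun i => k1 i + k2 i)%N = sgprod k1 * sgprod k2.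
Proof. by rewrite -big_split; apply: eq_bigr => i _; rewrite exprD. Qed.

Lemma sgprod_supp0 k : supp_lt 0 k -> sgprod k = 1.
Proof. by move=> k0; rewrite /sgprod big1 // => i _; rewrite k0 ?expr0. Qed.

Lemma sgprod_delta (v : 'I_p) : sgprod (fun x => nat_of_bool (x == v)) = pminor R (pa E v).
Proof.
rewrite /sgprod (bigD1 v) //= eqxx expr1 big1 ?mulr1 // => x /negbTE ->.
by rewrite expr0.
Qed.

Lemma pminor_pa_below (i : 'I_p) : uses_only (below i) (pminor R (pa E i)).
Proof.
apply: det_closed; first exact: uses_only_ring_closed.
move=> a b; rewrite mxE; apply: sigma_below; apply: Hnat.
  by have := enum_valP a; rewrite inE.
by have := enum_valP b; rewrite inE.
Qed.

Lemma sgprod_below n k : supp_lt n.+1 k -> uses_only (below n) (sgprod k).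
Proof.
have [P0 P1 _ _ PM] := @uses_only_ring_closed R p (@below p n).
move=> kn; apply: (big_ind (uses_only (below n))) => // i _.
case: (leqP i n) => [le_in | lt_ni]; last by rewrite kn ?expr0.
elim: (k i) => [|m IHm]; rewrite ?expr0 // exprS; apply: (PM) => //.
apply: (uses_only_sub _ (pminor_pa_below (i := i))) => v [a [b [ab bi ->]]].
by exists a, b; split => //; apply: leq_trans bi le_in.
Qed.

Lemma sgprod_in_RSigma k : in_RSigma (sgprod k).
Proof. by apply: (below_in_RSigma (n := p)); apply: sgprod_below => i; rewrite ltnNge ltnW. Qed.

Definition reducible (n : nat) g : Prop :=
  in_RSigma g /\ exists2 k, supp_lt n k &
    exists2 h, in_RSigmaE E h & in_IG E (sgprod k * g - h).

Definition common_reducible (n : nat) : Prop :=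
  forall r (g : 'I_r -> SPoly R p), (forall i, reducible n (g i)) ->
  exists2 k, supp_lt n k & exists h : 'I_r -> SPoly R p,
    forall i, in_RSigmaE E (h i) /\ in_IG E (sgprod k * g i - h i).

Definition low_reducible (n : nat) : Prop :=
  forall g, uses_only (below n) g -> reducible n g.

Lemma reducible_le n1 n2 g : (n1 <= n2)%N -> reducible n1 g -> reducible n2 g.
Proof.
move=> n12 [gR [k kn hP]]; split => //; exists k => // i le_n2i.
by apply: kn; apply: leq_trans le_n2i.
Qed.

Lemma reducible_RSigmaE n g : in_RSigmaE E g -> reducible n g.
Proof.
move=> gE; split; first exact: in_RSigmaE_RSigma.
exists (fun=> 0%N) => //; exists g => //.
by rewrite sgprod_supp0 // mul1r subrr; apply: in_IG0.
Qed.

Lemma reducible_IG n g : in_RSigma g -> in_IG E g -> reducible n g.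
Proof.
move=> gR gI; split => //; exists (fun=> 0%N) => //; exists 0.
  by rewrite -mpolyC0; apply: uses_onlyC.
by rewrite sgprod_supp0 // mul1r subr0.
Qed.

Lemma reducibleM n g1 g2 : reducible n g1 -> reducible n g2 -> reducible n (g1 * g2).
Proof.
move=> [g1R [k1 k1n [h1 h1E h1I]]] [g2R [k2 k2n [h2 h2E h2I]]].
split; first exact: uses_onlyM.
exists (fun i => k1 i + k2 i)%N; first by move=> i ni; rewrite k1n // k2n.
exists (h1 * h2); first exact: uses_onlyM.
have -> : sgprod (fun i => k1 i + k2 i)%N * (g1 * g2) - h1 * h2 =
    (sgprod k2 * g2) * (sgprod k1 * g1 - h1) + h1 * (sgprod k2 * g2 - h2).
  by rewrite sgprodD; ring.
apply: in_IGD; apply: in_IGMl => //; last exact: in_RSigmaE_RSigma.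
by apply: uses_onlyM => //; apply: sgprod_in_RSigma.
Qed.

Lemma reducibleD n g1 g2 : common_reducible n ->
  reducible n g1 -> reducible n g2 -> reducible n (g1 + g2).
Proof.
move=> Cn r1 r2.
have gP (i : 'I_2) : reducible n (if i == ord0 then g1 else g2) by case: ifP.
have [k kn [h hP]] := Cn 2 _ gP.
split; first by apply: uses_onlyD; [case: r1 | case: r2].
exists k => //; exists (h ord0 + h ord_max).
  by apply: uses_onlyD; [case: (hP ord0) | case: (hP ord_max)].
have [_ I1] := hP ord0; have [_ I2] := hP ord_max.
have -> : sgprod k * (g1 + g2) - (h ord0 + h ord_max) =
    (sgprod k * g1 - h ord0) + (sgprod k * g2 - h ord_max) by ring.
exact: in_IGD.
Qed.

Lemma reducible_ring_closed n : common_reducible n -> ring_closed (reducible n).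
Proof.
move=> Cn; have rC (c : R) : reducible n c%:MP by apply: reducible_RSigmaE; apply: uses_onlyC.
split; [rewrite -mpolyC0 | rewrite -mpolyC1 | rewrite -mpolyC1 -mpolyCN | |] => //.
  by move=> x y; apply: reducibleD.
exact: reducibleM.
Qed.

Lemma common_reducible0 : common_reducible 0.
Proof.
move=> r g gP; have /fin_all_exists [h hP] : forall i, exists h,
    in_RSigmaE E h /\ in_IG E (sgprod (fun=> 0%N) * g i - h).
  move=> i; have [_ [k k0 [h hE hI]]] := gP i.
  by exists h; rewrite !sgprod_supp0 in hI *.
by exists (fun=> 0%N) => //; exists h.
Qed.

Lemma low_reducible_from_sigma n : common_reducible n ->
  (forall u v : 'I_p, (u < n)%N -> (v < n)%N -> reducible n (sigma R u v)) ->
  low_reducible n.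
Proof.
move=> Cn sigmaP; have [_ _ _ PD PM] := reducible_ring_closed Cn.
apply: uses_only_ind => // [c|v [i [j [ij jn ->]]]].
  by apply: reducible_RSigmaE; apply: uses_onlyC.
by have := sigmaP i j (leq_ltn_trans ij jn) jn; rewrite /sigma ij.
Qed.

Lemma common_reducibleS n :
  common_reducible n -> low_reducible n -> common_reducible n.+1.
Proof.
move=> Cn Ln r g gP.
have /fin_all_exists [k kP] : forall i, exists k, supp_lt n.+1 k /\
    exists2 h, in_RSigmaE E h & in_IG E (sgprod k * g i - h).
  by move=> i; have [_ [k kn hP]] := gP i; exists k.
have /fin_all_exists [h hP] : forall i, exists h,
    in_RSigmaE E h /\ in_IG E (sgprod (k i) * g i - h).
  by move=> i; have [_ [h hE hI]] := kP i; exists h.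
pose K x := (\sum_(i < r) k i x)%N.
have Kn : supp_lt n.+1 K by move=> x nx; apply: big1 => i _; case: (kP i) => -> .
have le_kK i x : (k i x <= K x)%N by rewrite /K (bigD1 i) //= leq_addr.
pose g' i := sgprod (fun x => K x - k i x)%N * h i.
have g'P i : reducible n (g' i).
  apply: reducibleM; last by apply: reducible_RSigmaE; case: (hP i).
  by apply: Ln; apply: sgprod_below => x nx; rewrite Kn.
have [q qn [c cP]] := Cn r g' g'P.
exists (fun x => q x + K x)%N; first by move=> x nx; rewrite qn ?Kn // ltnW.
exists c => i; have [cE cI] := cP i; have [_ hI] := hP i; split => //.
have -> : sgprod (fun x => q x + K x)%N =
    sgprod q * sgprod (fun x => K x - k i x)%N * sgprod (k i).
  by rewrite -!sgprodD; apply: eq_sgprod => x; rewrite -addnA subnK.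
have -> : sgprod q * sgprod (fun x => K x - k i x)%N * sgprod (k i) * g i - c i =
    sgprod q * sgprod (fun x => K x - k i x)%N * (sgprod (k i) * g i - h i)
    + (sgprod q * g' i - c i) by rewrite /g'; ring.
by apply: in_IGD => //; apply: in_IGMl => //; apply: uses_onlyM; apply: sgprod_in_RSigma.
Qed.

Lemma reducible_pminor_sigma n (u v : 'I_p) :
  low_reducible n -> common_reducible n.+1 -> val v = n -> (u < n)%N -> ~~ E u v ->
  reducible n.+1 (pminor R (pa E v) * sigma R u v).
Proof.
move=> Ln Cn1 vn un uv; have PR := reducible_ring_closed Cn1.
have pa_lt x : x \in pa E v -> (x < n)%N by rewrite inE => /Hnat; rewrite vn.
have low (x y : 'I_p) : (x < n)%N -> (y < n)%N -> reducible n.+1 (sigma R x y).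
  by move=> xn yn; apply: (reducible_le (leqnSn n)); apply: Ln; apply: sigma_below.
have -> : pminor R (pa E v) * sigma R u v = cond_minor R u v (pa E v)
    - (cond_minor R u v (pa E v) - sigma R u v * pminor R (pa E v)) by ring.
apply: ring_closedB => //.
  apply: reducible_IG; last by apply: cond_minor_in_IG; rewrite // vn.
  apply: det_closed => [|a b]; first exact: uses_only_ring_closed.
  by rewrite mxE; apply: sigma_in_RSigma.
apply: cond_minor_sub_closed => // [x /pa_lt | x y xK]; first exact: low.
rewrite inE mem_enum => /orP [/eqP -> | yK]; last exact: low (pa_lt _ xK) (pa_lt _ yK).
by apply: reducible_RSigmaE; apply: sigma_in_RSigmaE; right; rewrite inE in xK.
Qed.

Lemma reducible_pminorK n (v : 'I_p) s : (v < n)%N -> in_RSigma s ->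
  reducible n (pminor R (pa E v) * s) -> reducible n s.
Proof.
move=> vn sR [_ [k kn [h hE hI]]]; split => //.
exists (fun x => k x + (x == v))%N.
  by move=> x nx; rewrite kn //; case: eqP => // xv; move: nx; rewrite xv leqNgt vn.
by exists h => //; rewrite sgprodD sgprod_delta -mulrA.
Qed.

Lemma low_reducibleS n :
  low_reducible n -> common_reducible n.+1 -> low_reducible n.+1.
Proof.
move=> Ln Cn1; apply: low_reducible_from_sigma => //.
have top (u v : 'I_p) : (u < n.+1)%N -> val v = n -> reducible n.+1 (sigma R u v).
  move=> un vn; have [<- | neq_uv] := eqVneq u v.
    by apply: reducible_RSigmaE; apply: sigma_in_RSigmaE; left.
  have un' : (u < n)%N.
    by rewrite ltn_neqAle -ltnS un andbT -vn; apply: contra neq_uv => /eqP/val_inj ->.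
  case Euv: (E u v); first by apply: reducible_RSigmaE; apply: sigma_in_RSigmaE; right.
  apply: (reducible_pminorK (v := v)); [by rewrite vn | exact: sigma_in_RSigma |].
  by apply: reducible_pminor_sigma => //; rewrite Euv.
move=> u v un vn.
have [vn' | nv] := eqVneq (val v) n; first exact: top.
have [un' | nu] := eqVneq (val u) n; first by rewrite sigmaC; apply: top.
apply: (reducible_le (leqnSn n)); apply: Ln; apply: sigma_below.
  by rewrite ltn_neqAle nu -ltnS.
by rewrite ltn_neqAle nv -ltnS.
Qed.

Lemma reducible_all_levels n : common_reducible n /\ low_reducible n.
Proof.
elim: n => [|n [Cn Ln]].
  split; first exact: common_reducible0.
  apply: low_reducible_from_sigma; first exact: common_reducible0.
  by move=> u v; rewrite ltn0.
have Cn1 := common_reducibleS Cn Ln.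
by split => //; apply: low_reducibleS.
Qed.

End Reduction.

Theorem mainTheorem9 (R : realType) (p : nat) (E : rel 'I_p)
  (Hnat : naturally_ordered E)
  (r : nat) (f : 'I_r -> SPoly R p) (Hf : forall i, in_RSigma (f i)) :
  exists (s : SPoly R p) (h : 'I_r -> SPoly R p),
    in_SG E s /\ (forall i, in_RSigmaE E (h i)) /\
    (forall i, in_IG E (s * f i - h i)).
Proof.
have [Cp Lp] := reducible_all_levels R Hnat p.
have [k _ [h hP]] := Cp r f (fun i => Lp _ (in_RSigma_below (Hf i))).
exists (sgprod R E k), h; split; first by exists k.
by split => i; case: (hP i).
Qed.
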